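(* Let $(\Omega,\mathcal A)$ be a measurable space. Suppose that to each non-empty compact set $L\subset\mathbb C^n$ is assigned a family $A(L)$ of continuous functions on $L$ such that whenever $Q\subset L$ is compact and $f\in A(L)$, then $f|_Q\in A(Q)$. Let $K$ be a uniformly separable random compact set in $\mathbb C^n$. Then $A_{[\Omega]}^{unif}(K)=A_{[\Omega]}(K)$.
   Context: A random compact set is a measurable map $K$ from $\Omega$ to the space of non-empty compact subsets of $\mathbb C^n$ with the Hausdorff distance and its Borel $\sigma$-algebra; it is uniformly separable if there is a countable $E\subset\mathbb C^n$ with $E\cap K(\omega)$ dense in $K(\omega)$ for all $\omega$. Let $\operatorname{Gr}K=\{(\omega,z)\in\Omega\times\mathbb C^n:z\in K(\omega)\}$ and $K^{-1}(z)=\{\omega:z\in K(\omega)\}$ (a measurable set). A generalized random function is $f:\operatorname{Gr}K\to\mathbb C$ such that for each $z$ with $K^{-1}(z)\ne\emptyset$, $f(\cdot,z):K^{-1}(z)\to\mathbb C$ is measurable. A generalized $A(K)$-random function is a generalized random function with $f(\omega,\cdot)\in A(K(\omega))$ for all $\omega$; generalized $C(K)$-random functions are those with $f(\omega,\cdot)$ continuous on $K(\omega)$ for all $\omega$. $A_{[\Omega]}(K)$ is the set of generalized $C(K)$-random functions $f$ for which there is a sequence of generalized $A(K)$-random functions $f_j$ with $f_j(\omega,\cdot)\to f(\omega,\cdot)$ uniformly on $K(\omega)$ for each $\omega$. $A_{[\Omega]}^{unif}(K)$ is the set of generalized $C(K)$-random functions $f$ for which there is a sequence of generalized $A(K)$-random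 functions $f_j$ with $f_j\to f$ uniformly on $\operatorname{Gr}K$. *)

From HB Require Import structures.
From mathcomp Require Import all_boot all_order all_algebra.
From mathcomp Require Import all_classical all_reals all_analysis.
From mathcomp Require Import complex.
Import Order.TTheory GRing.Theory Num.Theory.
Import numFieldNormedType.Exports.

Set Implicit Arguments.
Unset Strict Implicit.
Unset Printing Implicit Defensive.

Local Open Scope ring_scope.
Local Open Scope classical_set_scope.

Definition Cx (R : realType) : Type := R[i].
HB.instance Definition _ (R : realType) := Num.ClosedField.on (Cx R).
HB.instance Definition _ (R : realType) := NormedModule.copy (Cx R) (Cx R)^o.

(* C^n as row vectors; the norm on 'rV is the max of the complex moduli. *)
Notation Cn R n := 'rV[Cx R]_n.

Definition NKC (R : realType) (n : nat) : set (set (Cn R n)) :=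
  [set L | compact L /\ L !=set0].
Arguments NKC : clear implicits.

Definition nbhd_set (R : realType) (n : nat) (M : set (Cn R n)) (e : R) : set (Cn R n) :=
  [set z | exists2 y, M y & `|z - y| < ((e%:C)%C : Cx R)].

Definition hausdorff_dist (R : realType) (n : nat) (L M : set (Cn R n)) : \bar R :=
  ereal_inf [set e%:E | e in [set e : R | 0 < e /\
      L `<=` nbhd_set M e /\ M `<=` nbhd_set L e]].

Definition hausdorff_open (R : realType) (n : nat) (U : set (set (Cn R n))) : Prop :=
  U `<=` NKC R n /\
  forall L, U L -> exists2 e : R, 0 < e &
    forall M, NKC R n M -> (hausdorff_dist L M < e%:E)%E -> U M.

Definition random_compact_set (d : measure_display) (T : measurableType d)
  (R : realType) (n : nat) (K : T -> set (Cn R n)) : Prop :=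
  (forall w, NKC R n (K w)) /\
  forall B : set (set (Cn R n)), <<s NKC R n, hausdorff_open (n:=n) >> B ->
    measurable (K @^-1` B).

Definition uniformly_separable (d : measure_display) (T : measurableType d)
  (R : realType) (n : nat) (K : T -> set (Cn R n)) : Prop :=
  exists E : set (Cn R n), countable E /\
    forall w, K w `<=` closure (E `&` K w).

Definition Kinv (d : measure_display) (T : measurableType d)
  (R : realType) (n : nat) (K : T -> set (Cn R n)) (z : Cn R n) : set T :=
  [set w | K w z].

Definition borel_measurable_on (d : measure_display) (T : measurableType d)
  (U : topologicalType) (D : set T) (f : T -> U) : Prop :=
  forall B : set U, <<s open >> B -> measurable (D `&` f @^-1` B).

(* A function on Gr K is represented by f : T -> C^n -> C; only its values on
   Gr K matter in all definitions below. *)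
Definition gen_random_fun (d : measure_display) (T : measurableType d)
  (R : realType) (n : nat) (K : T -> set (Cn R n)) (f : T -> Cn R n -> Cx R) : Prop :=
  forall z, Kinv K z !=set0 -> borel_measurable_on (Kinv K z) (fun w => f w z).

(* A assigns to each compact L a family of functions on L, represented by
   (total) functions whose restrictions to L are the members of A(L). *)
Definition memA (R : realType) (n : nat) (A : set (Cn R n) -> set (Cn R n -> Cx R))
  (L : set (Cn R n)) (h : Cn R n -> Cx R) : Prop :=
  exists2 g, A L g & {in L, g =1 h}.

Definition gen_A_random_fun (d : measure_display) (T : measurableType d)
  (R : realType) (n : nat) (A : set (Cn R n) -> set (Cn R n -> Cx R))
  (K : T -> set (Cn R n)) (f : T -> Cn R n -> Cx R) : Prop :=
  gen_random_fun K f /\ forall w, memA A (K w) (f w).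

Definition gen_C_random_fun (d : measure_display) (T : measurableType d)
  (R : realType) (n : nat) (K : T -> set (Cn R n)) (f : T -> Cn R n -> Cx R) : Prop :=
  gen_random_fun K f /\ forall w, {within K w, continuous (f w)}.

Definition A_Omega (d : measure_display) (T : measurableType d)
  (R : realType) (n : nat) (A : set (Cn R n) -> set (Cn R n -> Cx R))
  (K : T -> set (Cn R n)) : set (T -> Cn R n -> Cx R) :=
  [set f | gen_C_random_fun K f /\
    exists fj : nat -> T -> Cn R n -> Cx R,
      (forall j, gen_A_random_fun A K (fj j)) /\
      forall w, forall e : R, 0 < e -> exists N : nat, forall j, (N <= j)%N ->
        forall z, K w z -> `|fj j w z - f w z| < ((e%:C)%C : Cx R)].

Definition A_Omega_unif (d : measure_display) (T : measurableType d)
  (R : realType) (n : nat) (A : set (Cn R n) -> set (Cn R n -> Cx R))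
  (K : T -> set (Cn R n)) : set (T -> Cn R n -> Cx R) :=
  [set f | gen_C_random_fun K f /\
    exists fj : nat -> T -> Cn R n -> Cx R,
      (forall j, gen_A_random_fun A K (fj j)) /\
      forall e : R, 0 < e -> exists N : nat, forall j, (N <= j)%N ->
        forall w z, K w z -> `|fj j w z - f w z| < ((e%:C)%C : Cx R)].

From HB Require Import structures.
From mathcomp Require Import all_boot all_order all_algebra.
From mathcomp Require Import all_classical all_reals all_analysis.
From mathcomp Require Import complex lra.
Import Order.TTheory GRing.Theory Num.Theory.
Import numFieldNormedType.Exports.
Local Open Scope ring_scope.
Local Open Scope classical_set_scope.

(* Let E be the countable set given by uniform separability. For each k let
   N_k(w) be the least m such that f_j(w,.) is 1/(k+1)-close to f(w,.) on
   E ∩ K(w) for every j >= m. Only countably many points z of E are tested, so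
   N_k is measurable and g_k(w,z) := f_(N_k(w))(w,z) is again a generalized
   A(K)-random function. Since E ∩ K(w) is dense in K(w) and both functions are
   continuous there, the bound 1/(k+1) holds on all of K(w), uniformly in w. *)

Lemma normc_le_Re_Im {R : rcfType} (u v : R) :
  `|(u +i* v)%C| <= (`|u| + `|v|)%:C%C.
Proof.
have -> : (u +i* v)%C = u%:C%C + 'i%C * v%:C%C by simpc.
rewrite rmorphD; apply: le_trans (ler_normD _ _) _.
by rewrite normrM normCi mul1r !normc_def /= !expr0n /= !addr0 !sqrtr_sqr.
Qed.

Definition ratc {R : realType} (x y : rat) : R[i] := (ratr x +i* ratr y)%C.

Lemma ratc_dense {R : realType} (a : R[i]) (e : R) : 0 < e ->
  exists x y : rat, `|a - ratc x y| < e%:C%C.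
Proof.
case: a => u v e0; have e20 : 0 < e / 2 by rewrite divr_gt0.
have /rat_in_itvoo[x] : u - e / 2 < u by rewrite ltrBlDr ltrDl.
have /rat_in_itvoo[y] : v - e / 2 < v by rewrite ltrBlDr ltrDl.
rewrite !in_itv /= => /andP[y1 y2] /andP[x1 x2]; exists x, y.
have -> : ((u +i* v) - ratc x y)%C = ((u - ratr x) +i* (v - ratr y))%C by [].
apply: le_lt_trans (normc_le_Re_Im _ _) _; rewrite ltcR.
rewrite !ger0_norm ?subr_ge0 ?ltW //; lra.
Qed.

Lemma normc_real (R : rcfType) (z : R[i]) : `|z| = (complex.Re `|z|)%:C%C.
Proof. by rewrite RRe_real ?normr_real. Qed.

Lemma ratc_split_dist {R : realType} (a b : R[i]) (e : R) :
  `|a - b| < e%:C%C -> exists x y r : rat,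
    `|a - ratc x y| < (ratr r)%:C%C /\ `|b - ratc x y| < (e - ratr r)%:C%C.
Proof.
rewrite normc_real ltcR; set nu := complex.Re _ => nue.
have d0 : 0 < (e - nu) / 3 by rewrite divr_gt0 // subr_gt0.
have [x [y]] := ratc_dense a _ d0.
rewrite normc_real ltcR; set mu := complex.Re _.
move=> /rat_in_itvoo[r]; rewrite in_itv /= => /andP[r1 r2].
exists x, y, r; split; first by rewrite normc_real ltcR.
apply: le_lt_trans (ler_distD a _ _) _.
rewrite distrC normc_real -/nu normc_real -/mu -rmorphD ltcR; lra.
Qed.

(* No measurable structure on C x C is available: the set is rather written as
   a countable union of [a^-1 (ball q r) `&` b^-1 (ball q (e - r))] over
   rational q and r. *)
Lemma measurable_normB_lt d (T : measurableType d) (R : realType) (D : set T)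
    (a b : T -> Cx R) (e : R) :
  borel_measurable_on D a -> borel_measurable_on D b ->
  measurable (D `&` [set w | `|a w - b w| < e%:C%C]).
Proof.
move=> ma mb.
pose q (t : rat * rat * rat) : Cx R := ratc t.1.1 t.1.2.
pose r (t : rat * rat * rat) : R := ratr t.2.
rewrite (_ : D `&` _ = \bigcup_t ((D `&` a @^-1` ball (q t) (r t)%:C%C) `&`
                                 (D `&` b @^-1` ball (q t) (e - r t)%:C%C))).
  apply: countable_bigcupT_measurable => [|t]; first exact: countableP.
  apply: measurableI; [apply: ma|apply: mb]; apply: sub_sigma_algebra;
  exact: ball_open.
apply/seteqP; split => w.
  case=> Dw /= /ratc_split_dist[x [y [z [ha hb]]]]; exists (x, y, z) => //.
  by rewrite -!ball_normE /= ![`|q _ - _|]distrC.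
case=> t _ [[Dw]]; rewrite -!ball_normE /= => ha [_ hb]; split => //=.
apply: le_lt_trans (ler_distD (q t) _ _) _.
have -> : (e%:C%C : Cx R) = (r t)%:C%C + (e - r t)%:C%C.
  by rewrite -rmorphD subrKC.
by rewrite (distrC (a w)); apply: ltrD.
Qed.

Lemma countable_bigcap_measurable d (T : measurableType d) (U : Type) (E : set U)
    (F : U -> set T) :
  countable E -> (forall z, E z -> measurable (F z)) ->
  measurable (\bigcap_(z in E) F z).
Proof.
move=> cE mF; rewrite -[X in measurable X]setCK setC_bigcap; apply: measurableC.
have [->|/set0P[r Er]] := eqVneq E set0; first by rewrite bigcup_set0.
have [f injf] := countable_injP _ cE.
rewrite -(injpinv_image (cst r) injf) bigcup_image.
apply: bigcup_measurable => _ [z Ez <-].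
by rewrite pinvKV ?inE //; apply/measurableC/mF.
Qed.

Lemma dense_norm_le (T : topologicalType) (K : numFieldType) (V : normedModType K)
    (L D : set T) (u : T -> V) (c : K) :
  L `<=` closure (D `&` L) -> {within L, continuous u} ->
  (forall y, D y -> L y -> `|u y| <= c) -> forall z, L z -> `|u z| <= c.
Proof.
move=> DL uc uD z Lz; apply/ler_addgt0Pr => eps eps0.
have := (subspace_continuousP L u).1 uc z Lz _ (nbhsx_ballx (u z) eps eps0).
rewrite nbhs_simpl /within /= => near_uz.
have [y [[Dy Ly] /(_ Ly)]] := DL z Lz _ near_uz.
rewrite -ball_normE /= => uyz.
rewrite -(subrKC (u y) (u z)); apply: le_trans (ler_normD _ _) _.
by apply: lerD; [exact: uD | exact: ltW].
Qed.

Section first_index.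
Context {d} {T : measurableType d} {G : nat -> set T}.
Hypothesis G_cover : forall w, exists m, G m w.

Lemma first_index_subproof w : exists m, `[< G m w >].
Proof. by have [m Gm] := G_cover w; exists m; apply/asboolP. Qed.

Definition first_index w := ex_minn (first_index_subproof w).

Lemma first_indexP w : G (first_index w) w.
Proof. by rewrite /first_index; case: ex_minnP => m /asboolP. Qed.

Lemma first_index_min w m : G m w -> (first_index w <= m)%N.
Proof.
by rewrite /first_index; case: ex_minnP => m' _ + Gm; apply; apply/asboolP.
Qed.

Lemma first_index_preimage m :
  [set w | first_index w = m] = G m `\` \bigcup_(i in `I_m) G i.
Proof.
apply/seteqP; split => w /=.
  move=> <-; split; first exact: first_indexP.
  by case=> i /= ilt /first_index_min; rewrite leqNgt ilt.
case=> Gm nG; apply/eqP; rewrite eqn_leq first_index_min //= leqNgt.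
by apply/negP => lt; apply: nG; exists (first_index w) => //; exact: first_indexP.
Qed.

Lemma measurable_first_index : (forall m, measurable (G m)) ->
  forall m, measurable [set w | first_index w = m].
Proof.
move=> mG m; rewrite first_index_preimage.
by apply: measurableD => //; exact: bigcup_measurable.
Qed.

End first_index.

Lemma borel_measurable_on_select d (T : measurableType d) (U : topologicalType)
    (D : set T) (N : T -> nat) (F : nat -> T -> U) :
  (forall m, measurable [set w | N w = m]) ->
  (forall m, borel_measurable_on D (F m)) ->
  borel_measurable_on D (fun w => F (N w) w).
Proof.
move=> mN mF B mB.
rewrite (_ : _ `&` _ = \bigcup_m ([set w | N w = m] `&` (D `&` F m @^-1` B))).
  by apply: bigcupT_measurable => m; apply: measurableI => //; exact: mF.
by apply/seteqP; split => [w [Dw Bw]|w [m _ [/= <- []]]] //; exists (N w).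
Qed.

Section generalized_random_function.
Context {d : measure_display} {T : measurableType d} {R : realType} {n : nat}.
Context {K : T -> set (Cn R n)}.
Implicit Types F G : T -> Cn R n -> Cx R.

Lemma gen_random_fun_borel F : gen_random_fun K F ->
  forall z, borel_measurable_on (Kinv K z) (fun w => F w z).
Proof.
move=> mF z; have [/mF//|/nonemptyPn ->] := pselect (Kinv K z !=set0).
by move=> B _; rewrite set0I.
Qed.

Lemma measurable_Kinv F : gen_random_fun K F -> forall z, measurable (Kinv K z).
Proof.
move=> /gen_random_fun_borel mF z; have := mF z setT (sub_sigma_algebra openT).
by rewrite preimage_setT setIT.
Qed.

Lemma measurable_close_on F G (E : set (Cn R n)) (e : R) :
  countable E -> gen_random_fun K F -> gen_random_fun K G ->
  measurable [set w | forall z, E z -> K w z -> `|F w z - G w z| < e%:C%C].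
Proof.
move=> cE mF mG.
rewrite (_ : [set w | _] = \bigcap_(z in E)
    (~` Kinv K z `|` (Kinv K z `&` [set w | `|F w z - G w z| < e%:C%C]))).
  apply: countable_bigcap_measurable => // z _.
  apply: measurableU; first exact/measurableC/(measurable_Kinv _ mF z).
  by apply: measurable_normB_lt; exact: gen_random_fun_borel.
apply/seteqP; split => w /= close z Ez.
  by have [Kz|] := pselect (K w z); [right; split => //; exact: close|left].
by move=> Kz; case: (close z Ez) => // -[].
Qed.

Lemma gen_random_fun_select (N : T -> nat) (F : nat -> T -> Cn R n -> Cx R) :
  (forall m, measurable [set w | N w = m]) ->
  (forall m, gen_random_fun K (F m)) ->
  gen_random_fun K (fun w => F (N w) w).
Proof.
move=> mN mF z _.
apply: (borel_measurable_on_select _ _ _ _ N (fun m w => F m w z)) => // m.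
exact: gen_random_fun_borel.
Qed.

Lemma gen_A_random_fun_continuous (A : set (Cn R n) -> set (Cn R n -> Cx R)) F :
  (forall L, NKC R n L -> forall g, A L g -> {within L, continuous g}) ->
  (forall w, NKC R n (K w)) -> gen_A_random_fun A K F ->
  forall w, {within K w, continuous (F w)}.
Proof.
move=> Acont KNKC [_ FA] w; have [g Ag eqg] := FA w.
by apply: (subspace_eq_continuous eqg); exact: Acont (KNKC w) _ Ag.
Qed.

End generalized_random_function.

Section uniform_approximation.
Context {d : measure_display} {T : measurableType d} {R : realType} {n : nat}.
Context (A : set (Cn R n) -> set (Cn R n -> Cx R)) {K : T -> set (Cn R n)}.
Context (E : set (Cn R n)) {f : T -> Cn R n -> Cx R}.
Context {fj : nat -> T -> Cn R n -> Cx R}.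
Hypothesis E_countable : countable E.
Hypothesis E_dense : forall w, K w `<=` closure (E `&` K w).
Hypothesis f_C : gen_C_random_fun K f.
Hypothesis fj_A : forall j, gen_A_random_fun A K (fj j).
Hypothesis fj_cont : forall j w, {within K w, continuous (fj j w)}.
Hypothesis fj_cvg : forall w (e : R), 0 < e -> exists N, forall j, (N <= j)%N ->
  forall z, K w z -> `|fj j w z - f w z| < e%:C%C.

Definition tail_close_on_E k m w := forall j, (m <= j)%N ->
  forall z, E z -> K w z -> `|fj j w z - f w z| < (k.+1%:R^-1)%:C%C.

Lemma tail_close_on_E_exists k w : exists m, tail_close_on_E k m w.
Proof.
have k_gt0 : 0 < k.+1%:R^-1 :> R by rewrite invr_gt0.
have [N HN] := fj_cvg w _ k_gt0.
by exists N => j Nj z _; exact: HN.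
Qed.

Lemma measurable_tail_close_on_E k m : measurable [set w | tail_close_on_E k m w].
Proof.
rewrite (_ : [set w | _] = \bigcap_(j in [set j | (m <= j)%N])
   [set w | forall z, E z -> K w z -> `|fj j w z - f w z| < (k.+1%:R^-1)%:C%C]).
  apply: bigcap_measurableType => j _.
  by apply: measurable_close_on => //; [exact: (fj_A j).1 | exact: f_C.1].
by apply/seteqP; split => w h j /h.
Qed.

Definition approximant k w := fj (first_index (tail_close_on_E_exists k) w) w.

Lemma gen_A_random_fun_approximant k : gen_A_random_fun A K (approximant k).
Proof.
split; last by move=> w; exact: (fj_A _).2.
apply: gen_random_fun_select => [m|m]; last exact: (fj_A m).1.
by apply: measurable_first_index => m'; exact: measurable_tail_close_on_E.
Qed.

Lemma approximant_close k w z : K w z ->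
  `|approximant k w z - f w z| <= (k.+1%:R^-1)%:C%C.
Proof.
move=> Kz.
apply: (dense_norm_le _ _ _ _ _ (approximant k w - f w) _ (E_dense w) _ _ _ Kz).
  exact: within_continuousB (fj_cont _ w) (f_C.2 w).
move=> y Ey Ky; apply: ltW.
by have /(_ _ (leqnn _) y Ey Ky) := first_indexP (tail_close_on_E_exists k) w.
Qed.

Lemma approximant_cvg_unif (e : R) : 0 < e -> exists N, forall k, (N <= k)%N ->
  forall w z, K w z -> `|approximant k w z - f w z| < e%:C%C.
Proof.
move=> e0; have [N _ hN] := near_infty_natSinv_lt (PosNum e0).
exists N => k Nk w z Kz; apply: le_lt_trans (approximant_close _ _ _ Kz) _.
by rewrite ltcR; exact: hN.
Qed.

End uniform_approximation.

Theorem theorem7p4 (d : measure_display) (Omega : measurableType d)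
  (R : realType) (n : nat)
  (A : set 'rV[Cx R]_n -> set ('rV[Cx R]_n -> Cx R))
  (hAcont : forall L, NKC R n L -> forall g, A L g -> {within L, continuous g})
  (hArestr : forall L Q, NKC R n L -> NKC R n Q -> Q `<=` L ->
     forall g, A L g -> memA A Q g)
  (K : Omega -> set 'rV[Cx R]_n)
  (hK : random_compact_set K)
  (hsep : uniformly_separable K) :
  A_Omega_unif A K = A_Omega A K.
Proof.
apply/seteqP; split => f [fC [fj [fjA fj_cvg]]]; split => //.
  exists fj; split => // w e e0.
  by have [N HN] := fj_cvg e e0; exists N => j Nj z; exact: HN.
have [E [E_countable E_dense]] := hsep.
have fj_cont j := gen_A_random_fun_continuous _ _ hAcont hK.1 (fjA j).
exists (approximant E fj_cvg); split => [k|].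
  exact: gen_A_random_fun_approximant.
exact: approximant_cvg_unif.
Qed.
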